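(* Let $n\ge 1$ be an integer and consider the control system with state $(x_n,z_{n-1},\dots,z_1,z_0)\in\mathbb{R}^{n+1}$ and scalar control $v(t)$: $$\dot x_n=v-x_n,\qquad \dot z_{n-1}=v,\qquad \dot z_k=z_{k+1}\ (0\le k\le n-2),$$ together with the running cost $\frac12\big[(z_0-x_1)^2+x_1^2\big]$, where $$x_1:=\sum_{k=1}^{n-1}(-1)^{k+1}z_k+(-1)^{n+1}x_n$$ (for $n=1$, $x_1$ is simply the state $x_n$). Let $p_n,p_{n-1},\dots,p_0$ be adjoint variables associated respectively with $x_n,z_{n-1},\dots,z_0$, with Pontryagin Hamiltonian $$H_S=p_n(v-x_n)+p_{n-1}v+p_{n-2}z_{n-1}+\dots+p_0z_1-\tfrac12\big[(z_0-x_1)^2+x_1^2\big]$$ (the terms $p_{k-1}z_k$ being absent when $n=1$), and adjoint equations $\dot p_n=-\partial H_S/\partial x_n$, $\dot p_{k}=-\partial H_S/\partial z_k$, i.e. $$\dot p_n=p_n+(-1)^{n+1}(2x_1-z_0),\quad \dot p_k=-p_{k-1}+(-1)^{k+1}(2x_1-z_0)\ (1\le k\le n-1),\quad \dot p_0=z_0-x_1 .$$ Suppose that on an open time interval $I$ a solution of these state and adjoint equations, with a continuous control $v$, satisfies the singularity condition $\partial H_S/\partial v=p_n+p_{n-1}=0$ identically on $I$. Then on $I$ one has $z_0=z_1=\dots=z_{n-1}=v$, and there are constants $Y,Z\in\mathbb{R}$ such that for all $t\in I$ $$z_0(t)=\dots=z_{n-1}(t)=v(t)=Ze^{t},\qquad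 x_n(t)=Ye^{-t}+Z\sinh(t).$$ In particular the singular control $v=Ze^t$ has the same form for every $n$.
   Context: This system arises from the scalar dynamics $\dot x+x=u$ by setting $x_k=x^{(k)}$, $z_k=u^{(k)}$, $v=u^{(n)}$, so that the cost integrand $(z_0-x_1)^2+x_1^2$ equals $x^2+\dot x^2$. For $n=1$, write $y=x_1$, $z=z_0$; the system is $\dot y=v-y$, $\dot z=v$ with cost $\int[(z-y)^2+y^2]dt$. *)

From Stdlib Require Import Reals Lra Lia.
Open Scope R_scope.

Fixpoint sumR (f : nat -> R) (m : nat) : R :=
  match m with
  | O => 0
  | S m' => sumR f m' + f m'
  end.

Definition is_open_interval (I : R -> Prop) : Prop :=
  (exists t, I t) /\
  (forall x y w, I x -> I w -> x <= y <= w -> I y) /\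
  (forall x, I x -> exists e, e > 0 /\ forall y, Rabs (y - x) < e -> I y).

(* x_1 := sum_{k=1}^{n-1} (-1)^(k+1) z_k + (-1)^(n+1) x_n ;
   here z k t is z_k(t) and xn t is x_n(t). *)
Definition x1 (n : nat) (xn : R -> R) (z : nat -> R -> R) (t : R) : R :=
  sumR (fun j => (-1) ^ (j + 2) * z (j + 1)%nat t) (n - 1)
  + (-1) ^ (n + 1) * xn t.

(* Differentiating the singularity condition p_n + p_(n-1) = 0 and feeding in the adjoint
   equations one step at a time propagates it down the adjoint chain:
   (-1)^k p_n = (-1)^n p_k for every k < n.  Comparing p_n with p_0 gives p_n = (-1)^n x_1;
   differentiating once more and using x_1' = z_1 - x_1 (the alternating sum defining x_1
   telescopes) forces z_1 = z_0, where z_n stands for v.  Since z_k' = z_(k+1), induction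
   then makes every z_k equal to z_0, so z_0' = z_0 and z_0 = Z e^t; finally x_n - Z sinh t
   satisfies y' = -y. *)
From Stdlib Require Import Reals Lra Lia.
Open Scope R_scope.

Lemma pow_m1_S (k : nat) : (-1) ^ (k + 1) = - (-1) ^ k.
Proof. rewrite pow_add; simpl; ring. Qed.

Lemma pow_m1_SS (k : nat) : (-1) ^ (k + 2) = (-1) ^ k.
Proof. rewrite pow_add; simpl; ring. Qed.

Lemma derivable_pt_lim_eq (f : R -> R) (t l l' : R) :
  derivable_pt_lim f t l -> l = l' -> derivable_pt_lim f t l'.
Proof. now intros H <-. Qed.

Lemma derivable_pt_lim_sumR (f : nat -> R -> R) (df : nat -> R) (t : R) (m : nat) :
  (forall j, (j < m)%nat -> derivable_pt_lim (f j) t (df j)) ->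
  derivable_pt_lim (fun s => sumR (fun j => f j s) m) t (sumR df m).
Proof.
  induction m as [|m IHm]; intros Hf; simpl.
  - apply derivable_pt_lim_const.
  - apply (derivable_pt_lim_plus (fun s => sumR (fun j => f j s) m) (f m)).
    + apply IHm; intros; apply Hf; lia.
    + apply Hf; lia.
Qed.

Lemma derivable_pt_lim_exp_scal (c t : R) :
  derivable_pt_lim (fun s => exp (c * s)) t (c * exp (c * t)).
Proof.
  apply (derivable_pt_lim_eq (comp exp (mult_real_fct c id)) t (exp (c * t) * (c * 1))).
  - apply derivable_pt_lim_comp; [|apply derivable_pt_lim_exp].
    apply derivable_pt_lim_scal, derivable_pt_lim_id.
  - unfold comp, mult_real_fct, id; ring.
Qed.

Lemma sumR_ext (f g : nat -> R) (m : nat) :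
  (forall j, (j < m)%nat -> f j = g j) -> sumR f m = sumR g m.
Proof.
  induction m as [|m IHm]; intros Hfg; simpl; [reflexivity |].
  rewrite Hfg by lia. f_equal. apply IHm; intros; apply Hfg; lia.
Qed.

(* The form in which the alternating sum defining x_1 telescopes. *)
Lemma sumR_alternating_shift (a : nat -> R) (m : nat) :
  sumR (fun j => (-1) ^ (j + 2) * a (j + 2)%nat) m =
  a 1%nat - sumR (fun j => (-1) ^ (j + 2) * a (j + 1)%nat) m
  + (-1) ^ (m + 1) * a (m + 1)%nat.
Proof.
  induction m as [|m IHm]; simpl sumR.
  - simpl; ring.
  - rewrite IHm, pow_m1_SS.
    replace (S m + 1)%nat with (m + 2)%nat by lia.
    replace (m + 1)%nat with (S m) by lia.
    rewrite pow_m1_SS; simpl; ring.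
Qed.

Section OpenInterval.

Variable I : R -> Prop.
Hypothesis hI : is_open_interval I.

Lemma derivable_pt_lim_unique_on (f g : R -> R) (t a b : R) :
  I t -> (forall s, I s -> f s = g s) ->
  derivable_pt_lim f t a -> derivable_pt_lim g t b -> a = b.
Proof.
  intros It Hfg Hf Hg.
  destruct hI as [_ [_ Hopen]].
  destruct (Hopen t It) as [e [He Hball]].
  apply (uniqueness_limite g t a b); [|exact Hg].
  intros eps Heps. destruct (Hf eps Heps) as [d Hd].
  assert (Hde : 0 < Rmin d e) by (apply Rmin_pos; [apply cond_pos | lra]).
  exists (mkposreal _ Hde). intros h hnz hlt. simpl in hlt.
  rewrite <- !Hfg; [| exact It |].
  - apply Hd; [exact hnz |]. apply Rlt_le_trans with (1 := hlt); apply Rmin_l.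
  - apply Hball. replace (t + h - t) with h by ring.
    apply Rlt_le_trans with (1 := hlt); apply Rmin_r.
Qed.

Lemma derivable_pt_lim_zero_const_on (f : R -> R) :
  (forall s, I s -> derivable_pt_lim f s 0) ->
  forall a b, I a -> I b -> f a = f b.
Proof.
  intros Hd.
  assert (Hle : forall a b, a <= b -> I a -> I b -> f a = f b).
  { intros a b Hab Ia Ib.
    assert (Iab : forall x, a <= x <= b -> I x).
    { intros x Hx. destruct hI as [_ [Hconv _]]. exact (Hconv a x b Ia Ib Hx). }
    assert (pr : forall x, a < x < b -> derivable_pt f x).
    { intros x Hx. exists 0. apply Hd, Iab; lra. }
    symmetry. apply (null_derivative_loc f a b pr); [| | lra].
    - intros x Hx. apply derivable_continuous_pt. exists 0. apply Hd, Iab; lra.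
    - intros x Hx. destruct (pr x Hx) as [l Hl]; simpl.
      apply (uniqueness_limite f x); [exact Hl |]. apply Hd, Iab; lra. }
  intros a b Ia Ib. destruct (Rle_dec a b).
  - now apply Hle.
  - symmetry; apply Hle; auto; lra.
Qed.

Lemma derivable_pt_lim_scal_self_on (f : R -> R) (c : R) :
  (forall s, I s -> derivable_pt_lim f s (c * f s)) ->
  exists Y, forall t, I t -> f t = Y * exp (c * t).
Proof.
  intros Hf. destruct hI as [[t0 It0] _].
  assert (Hconst : forall s, I s -> derivable_pt_lim (fun s => f s * exp (- c * s)) s 0).
  { intros s Is.
    eapply derivable_pt_lim_eq.
    - exact (derivable_pt_lim_mult _ _ s _ _ (Hf s Is) (derivable_pt_lim_exp_scal (- c) s)).
    - cbv beta; ring. }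
  exists (f t0 * exp (- c * t0)). intros t It.
  rewrite <- (derivable_pt_lim_zero_const_on _ Hconst t t0 It It0).
  rewrite Rmult_assoc, <- exp_plus.
  replace (- c * t + c * t) with 0 by ring. rewrite exp_0; ring.
Qed.

Lemma derivable_pt_lim_exp_forced_on (f : R -> R) (Z : R) :
  (forall s, I s -> derivable_pt_lim f s (Z * exp s - f s)) ->
  exists Y, forall t, I t -> f t = Y * exp (- t) + Z * sinh t.
Proof.
  intros Hf.
  assert (Hdecay : forall s, I s ->
            derivable_pt_lim (fun s => f s - Z * sinh s) s (-1 * (f s - Z * sinh s))).
  { intros s Is. eapply derivable_pt_lim_eq.
    - exact (derivable_pt_lim_minus _ _ s _ _ (Hf s Is)
               (derivable_pt_lim_scal sinh Z s _ (derivable_pt_lim_sinh s))).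
    (* e^s - cosh s = sinh s *)
    - unfold minus_fct, mult_real_fct, cosh, sinh. field. }
  destruct (derivable_pt_lim_scal_self_on _ _ Hdecay) as [Y HY].
  exists Y. intros t It.
  replace (- t) with (-1 * t) by ring. rewrite <- HY by exact It. ring.
Qed.

End OpenInterval.

(* The chain z_0, ..., z_(n-1) continued by z_n := v, so that z_k' = z_(k+1) for all k < n. *)
Definition zext (n : nat) (z : nat -> R -> R) (v : R -> R) (k : nat) : R -> R :=
  if (k <? n)%nat then z k else v.

Lemma zext_lt (n : nat) (z : nat -> R -> R) (v : R -> R) (k : nat) :
  (k < n)%nat -> zext n z v k = z k.
Proof. intros Hk. unfold zext. now destruct (Nat.ltb_spec k n); [| lia]. Qed.

Lemma zext_last (n : nat) (z : nat -> R -> R) (v : R -> R) : zext n z v n = v.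
Proof. unfold zext. now destruct (Nat.ltb_spec n n); [lia |]. Qed.

Section SingularArc.

Variable n : nat.
Hypothesis hn : (1 <= n)%nat.
Variable I : R -> Prop.
Hypothesis hI : is_open_interval I.
Variables (xn v : R -> R) (z p : nat -> R -> R).

Hypothesis hxn : forall t, I t -> derivable_pt_lim xn t (v t - xn t).
Hypothesis hzlast : forall t, I t -> derivable_pt_lim (z (n - 1)%nat) t (v t).
Hypothesis hz : forall k t, (k + 2 <= n)%nat -> I t ->
  derivable_pt_lim (z k) t (z (k + 1)%nat t).
Hypothesis hpn : forall t, I t ->
  derivable_pt_lim (p n) t (p n t + (-1) ^ (n + 1) * (2 * x1 n xn z t - z 0%nat t)).
Hypothesis hpk : forall k t, (1 <= k)%nat -> (k + 1 <= n)%nat -> I t ->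
  derivable_pt_lim (p k) t
    (- p (k - 1)%nat t + (-1) ^ (k + 1) * (2 * x1 n xn z t - z 0%nat t)).
Hypothesis hp0 : forall t, I t ->
  derivable_pt_lim (p 0%nat) t (z 0%nat t - x1 n xn z t).
Hypothesis hsing : forall t, I t -> p n t + p (n - 1)%nat t = 0.

Lemma derivable_pt_lim_zext k t :
  (k < n)%nat -> I t -> derivable_pt_lim (z k) t (zext n z v (k + 1) t).
Proof.
  intros Hk It. destruct (Compare_dec.le_lt_dec (k + 2) n) as [Hk2 | Hk2].
  - rewrite zext_lt by lia. now apply hz.
  - replace k with (n - 1)%nat by lia. replace (n - 1 + 1)%nat with n by lia.
    rewrite zext_last. now apply hzlast.
Qed.

Lemma derivable_pt_lim_x1 t :
  I t -> derivable_pt_lim (x1 n xn z) t (zext n z v 1 t - x1 n xn z t).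
Proof.
  intros It.
  assert (Hsum : derivable_pt_lim
            (fun s => sumR (fun j => (-1) ^ (j + 2) * z (j + 1)%nat s) (n - 1)) t
            (sumR (fun j => (-1) ^ (j + 2) * zext n z v (j + 2) t) (n - 1))).
  { apply (derivable_pt_lim_sumR (fun j s => (-1) ^ (j + 2) * z (j + 1)%nat s)).
    intros j Hj. apply (derivable_pt_lim_scal (z (j + 1)%nat)).
    replace (j + 2)%nat with (j + 1 + 1)%nat by lia.
    apply derivable_pt_lim_zext; [lia | exact It]. }
  eapply derivable_pt_lim_eq.
  - exact (derivable_pt_lim_plus _ _ t _ _ Hsum
             (derivable_pt_lim_scal _ ((-1) ^ (n + 1)) _ _ (hxn t It))).
  - rewrite (sumR_alternating_shift (fun k => zext n z v k t)).
    replace (n - 1 + 1)%nat with n by lia.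
    rewrite zext_last, pow_m1_S. unfold x1.
    rewrite (sumR_ext (fun j => (-1) ^ (j + 2) * zext n z v (j + 1) t)
               (fun j => (-1) ^ (j + 2) * z (j + 1)%nat t)).
    + rewrite pow_m1_S; ring.
    + intros j Hj. now rewrite zext_lt by lia.
Qed.

Lemma adjoint_chain k t :
  (k < n)%nat -> I t -> (-1) ^ k * p n t = (-1) ^ n * p k t.
Proof.
  intros Hk. revert t. replace k with (n - 1 - (n - 1 - k))%nat by lia.
  generalize (n - 1 - k)%nat as d. clear k Hk.
  induction d as [|d IHd]; intros t It.
  - pose proof (hsing t It) as Hs.
    replace (n - 1 - 0)%nat with (n - 1)%nat by lia.
    replace ((-1) ^ n) with (- (-1) ^ (n - 1)) by (rewrite <- pow_m1_S; f_equal; lia).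
    replace (p n t) with (- p (n - 1)%nat t) by lra. ring.
  - destruct (Compare_dec.le_lt_dec n (S d)) as [Hd | Hd].
    + replace (n - 1 - S d)%nat with (n - 1 - d)%nat by lia. now apply IHd.
    + set (k := (n - 1 - S d)%nat) in *.
      replace (n - 1 - d)%nat with (k + 1)%nat in IHd by lia.
      (* the source terms (-1)^(k+1) (-1)^(n+1) (2 x_1 - z_0) on both sides cancel *)
      pose proof (derivable_pt_lim_unique_on I hI _ _ t _ _ It IHd
        (derivable_pt_lim_scal (p n) ((-1) ^ (k + 1)) t _ (hpn t It))
        (derivable_pt_lim_scal (p (k + 1)%nat) ((-1) ^ n) t _
           (hpk (k + 1)%nat t ltac:(lia) ltac:(lia) It))) as E.
      replace (k + 1 - 1)%nat with k in E by lia.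
      replace (k + 1 + 1)%nat with (k + 2)%nat in E by lia.
      rewrite pow_m1_SS, !pow_m1_S in E.
      set (a := (-1) ^ k) in *. set (b := (-1) ^ n) in *. lra.
Qed.

Lemma adjoint_last_eq_x1 t : I t -> p n t = (-1) ^ n * x1 n xn z t.
Proof.
  intros It.
  assert (Hp0 : forall s, I s -> p n s = (-1) ^ n * p 0%nat s).
  { intros s Is. rewrite <- (adjoint_chain 0 s ltac:(lia) Is). simpl; ring. }
  pose proof (derivable_pt_lim_unique_on I hI _ _ t _ _ It Hp0 (hpn t It)
    (derivable_pt_lim_scal (p 0%nat) ((-1) ^ n) t _ (hp0 t It))) as E.
  rewrite pow_m1_S in E. set (b := (-1) ^ n) in *. lra.
Qed.

Lemma zext_1_eq_z0 t : I t -> zext n z v 1 t = z 0%nat t.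
Proof.
  intros It.
  pose proof (derivable_pt_lim_unique_on I hI _ _ t _ _ It adjoint_last_eq_x1 (hpn t It)
    (derivable_pt_lim_scal _ ((-1) ^ n) t _ (derivable_pt_lim_x1 t It))) as E.
  rewrite pow_m1_S, (adjoint_last_eq_x1 t It) in E.
  assert (Hb : (-1) ^ n * (z 0%nat t - zext n z v 1 t) = 0) by lra.
  apply Rmult_integral in Hb. destruct Hb as [Hb | Hb]; [| lra].
  exfalso. apply (pow_nonzero (-1) n); [lra | exact Hb].
Qed.

Lemma zext_eq_z0 k t : (k <= n)%nat -> I t -> zext n z v k t = z 0%nat t.
Proof.
  revert t. induction k as [|k IHk]; intros t Hk It.
  - now rewrite zext_lt by lia.
  - assert (Hzk : forall s, I s -> z k s = z 0%nat s).
    { intros s Is. rewrite <- (zext_lt n z v k) by lia. apply IHk; [lia | exact Is]. }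
    pose proof (derivable_pt_lim_unique_on I hI _ _ t _ _ It Hzk
      (derivable_pt_lim_zext k t ltac:(lia) It)
      (derivable_pt_lim_zext 0 t ltac:(lia) It)) as E.
    replace (k + 1)%nat with (S k) in E by lia.
    rewrite E. now apply zext_1_eq_z0.
Qed.

Lemma derivable_pt_lim_z0 t : I t -> derivable_pt_lim (z 0%nat) t (z 0%nat t).
Proof.
  intros It. rewrite <- (zext_eq_z0 1 t) by (lia || exact It).
  now apply derivable_pt_lim_zext; [lia |].
Qed.

End SingularArc.

Theorem mainTheorem1 (n : nat) (hn : (1 <= n)%nat)
  (I : R -> Prop) (hI : is_open_interval I)
  (xn v : R -> R) (z p : nat -> R -> R)
  (hv : forall t, I t -> continuity_pt v t)
  (hxn : forall t, I t -> derivable_pt_lim xn t (v t - xn t))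
  (hzlast : forall t, I t -> derivable_pt_lim (z (n - 1)%nat) t (v t))
  (hz : forall k t, (k + 2 <= n)%nat -> I t ->
          derivable_pt_lim (z k) t (z (k + 1)%nat t))
  (hpn : forall t, I t ->
          derivable_pt_lim (p n) t
            (p n t + (-1) ^ (n + 1) * (2 * x1 n xn z t - z 0%nat t)))
  (hpk : forall k t, (1 <= k)%nat -> (k + 1 <= n)%nat -> I t ->
          derivable_pt_lim (p k) t
            (- p (k - 1)%nat t + (-1) ^ (k + 1) * (2 * x1 n xn z t - z 0%nat t)))
  (hp0 : forall t, I t ->
          derivable_pt_lim (p 0%nat) t (z 0%nat t - x1 n xn z t))
  (hsing : forall t, I t -> p n t + p (n - 1)%nat t = 0) :
  (forall t k, I t -> (k < n)%nat -> z k t = v t) /\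
  exists Y Z : R, forall t, I t ->
    (forall k, (k < n)%nat -> z k t = Z * exp t) /\
    v t = Z * exp t /\
    xn t = Y * exp (- t) + Z * sinh t.
Proof.
  pose proof (zext_eq_z0 n hn I hI xn v z p hxn hzlast hz hpn hpk hp0 hsing) as Hzext.
  assert (Hv : forall t, I t -> v t = z 0%nat t).
  { intros t It. rewrite <- (zext_last n z v). now apply Hzext. }
  assert (Hz : forall t k, I t -> (k < n)%nat -> z k t = v t).
  { intros t k It Hk. rewrite Hv, <- (zext_lt n z v k) by assumption.
    apply Hzext; [lia | exact It]. }
  split; [exact Hz |].
  assert (Hz0 : forall t, I t -> derivable_pt_lim (z 0%nat) t (1 * z 0%nat t)).
  { intros t It. rewrite Rmult_1_l.
    exact (derivable_pt_lim_z0 n hn I hI xn v z p hxn hzlast hz hpn hpk hp0 hsing t It). }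
  destruct (derivable_pt_lim_scal_self_on I hI _ _ Hz0) as [Z HZ].
  assert (HvZ : forall t, I t -> v t = Z * exp t).
  { intros t It. rewrite Hv, HZ by exact It. now rewrite Rmult_1_l. }
  assert (Hxn : forall t, I t -> derivable_pt_lim xn t (Z * exp t - xn t)).
  { intros t It. rewrite <- HvZ by exact It. now apply hxn. }
  destruct (derivable_pt_lim_exp_forced_on I hI _ _ Hxn) as [Y HY].
  exists Y, Z. intros t It. repeat split.
  - intros k Hk. rewrite Hz by assumption. now apply HvZ.
  - now apply HvZ.
  - now apply HY.
Qed.
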